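(* Let $M$ and $M'$ be two stable matchings in an instance $I$ of SPA-S, and let $M^\land$ be the assignment defined from $M,M'$ in the context. Then $M^\land$ is a stable matching.
   Context: An instance $I$ of SPA-S consists of a finite set $\mathcal{S}$ of students, a finite set $\mathcal{P}$ of projects and a finite set $\mathcal{L}$ of lecturers. Each student $s_i$ ranks a subset $A_i\subseteq\mathcal{P}$ (its acceptable projects) in strict order. Each project is offered by exactly one lecturer; lecturer $l_k$ offers a nonempty set $P_k\subseteq\mathcal{P}$, the $P_k$ partitioning $\mathcal{P}$. Each lecturer $l_k$ ranks in strict order the students who find at least one project of $P_k$ acceptable. Projects have capacities $c_j\in\mathbb{Z}^+$, lecturers have capacities $d_k\in\mathbb{Z}^+$ with $\max\{c_j:p_j\in P_k\}\le d_k\le\sum\{c_j:p_j\in P_k\}$. A pair $(s_i,p_j)$, $p_j$ offered by $l_k$, is acceptable if $p_j\in A_i$ and $s_i$ is on $l_k$'s list. A matching $M$ is a set of acceptable pairs with each student in at most one pair, $|M(p_j)|\le c_j$, $|M(l_k)|\le d_k$, where for an assignment $M$ (a set of acceptable pairs), $M(s_i)$, $M(p_j)$, $M(l_k)$ denote the project of $s_i$, the students assigned to $p_j$, and the students assigned to projects of $l_k$. Undersubscribed/full means fewer than/exactly capacity many assigned students. An acceptable pair $(s_i,p_j)\notin M$ ($p_j$ offered by $l_k$) blocks $M$ if ($s_i$ is unassigned or prefers $p_j$ to $M(s_i)$) and one of: (P1) $p_j$ and $l_k$ undersubscribed; (P2) $p_j$ undersubscribed, $l_k$ full, $s_i\in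 M(l_k)$; (P3) $p_j$ undersubscribed, $l_k$ full, $l_k$ prefers $s_i$ to the worst student of $M(l_k)$; (P4) $p_j$ full and $l_k$ prefers $s_i$ to the worst student of $M(p_j)$. $M$ is stable if it is a matching with no blocking pair. Given stable matchings $M,M'$, $M^\land$ is the assignment in which each student unassigned in both $M$ and $M'$ is unassigned, each student assigned to the same project in both is assigned to that project, and every other student is assigned to the better (in her preference) of her projects in $M$ and $M'$. *)

From mathcomp Require Import all_boot all_order.
Set Implicit Arguments. Unset Strict Implicit. Unset Printing Implicit Defensive.

(* An instance of SPA-S over finite sets of students S, projects P, lecturers L. *)
Record spa_instance (S P L : finType) := SpaInstance {
  acc : S -> P -> bool;
  (* student's strict ranking: smaller rank = more preferred *)
  rankS : S -> P -> nat;
  offer : P -> L;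
  (* lecturer's strict ranking of students: smaller rank = more preferred *)
  rankL : L -> S -> nat;
  cap : P -> nat;
  dcap : L -> nat;
  rankS_inj : forall s p q, acc s p -> acc s q -> rankS s p = rankS s q -> p = q;
  rankL_inj : forall l s t,
      [exists p, (offer p == l) && acc s p] ->
      [exists p, (offer p == l) && acc t p] ->
      rankL l s = rankL l t -> s = t;
  offer_nonempty : forall l, [exists p, offer p == l];
  cap_pos : forall p, 0 < cap p;
  dcap_pos : forall l, 0 < dcap l;
  dcap_ge_max : forall l p, offer p = l -> cap p <= dcap l;
  dcap_le_sum : forall l, dcap l <= \sum_(p | offer p == l) cap p
}.

Section SPA.
Variables (S P L : finType) (I : spa_instance S P L).

Definition on_list (l : L) (s : S) : bool :=
  [exists p, (offer I p == l) && acc I s p].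

Definition acceptable (s : S) (p : P) : bool :=
  acc I s p && on_list (offer I p) s.

Definition sprefers (s : S) (p q : P) : bool := rankS I s p < rankS I s q.
Definition lprefers (l : L) (s t : S) : bool := rankL I l s < rankL I l t.

(* An assignment: each student is in at most one pair, given as an option. *)
Definition assignment := S -> option P.

Definition is_assignment (M : assignment) : Prop :=
  forall s p, M s = Some p -> acceptable s p.

Definition Mp (M : assignment) (p : P) : {set S} := [set s | M s == Some p].
Definition Ml (M : assignment) (l : L) : {set S} :=
  [set s | if M s is Some p then offer I p == l else false].

Definition is_matching (M : assignment) : Prop :=
  is_assignment M /\
  (forall p, #|Mp M p| <= cap I p) /\
  (forall l, #|Ml M l| <= dcap I l).

Definition worst (l : L) (A : {set S}) : option S :=
  [pick t in A | [forall u in A, rankL I l u <= rankL I l t]].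

Definition l_prefers_to_worst (l : L) (s : S) (A : {set S}) : bool :=
  if worst l A is Some w then lprefers l s w else false.

Definition blocks (M : assignment) (s : S) (p : P) : bool :=
  let l := offer I p in
  [&& acceptable s p, M s != Some p,
      (if M s is Some q then sprefers s p q else true) &
      [|| (#|Mp M p| < cap I p) && (#|Ml M l| < dcap I l),
          [&& #|Mp M p| < cap I p, #|Ml M l| == dcap I l & s \in Ml M l],
          [&& #|Mp M p| < cap I p, #|Ml M l| == dcap I l &
              l_prefers_to_worst l s (Ml M l)]
        | (#|Mp M p| == cap I p) && l_prefers_to_worst l s (Mp M p)]].

Definition stable (M : assignment) : Prop :=
  is_matching M /\ forall s p, ~~ blocks M s p.

Definition meet_assignment (M M' : assignment) : assignment := fun s =>
  match M s, M' s with
  | None, None => None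
  | Some p, None => Some p
  | None, Some p' => Some p'
  | Some p, Some p' => if sprefers s p' p then Some p' else Some p
  end.

End SPA.

From mathcomp Require Import all_boot all_order zify.
Set Implicit Arguments. Unset Strict Implicit. Unset Printing Implicit Defensive.

(* Let N = M^\land.  A student who holds q in N but not in M covets q in M, so by
   stability of M either q is full in M or the lecturer l of q ranks that student below
   all of M(l).  Two such students coming from opposite sides of the same project would
   outrank each other, hence N(q) is contained in M(q) or in M'(q); in particular N
   respects project capacities.
   For a lecturer l, either N fills no project of l beyond M, or a project of l that is
   undersubscribed in M is gained in N; the gaining student t then lies in M'(l) but
   below every student of the full M(l), which forces N to fill no project of l beyond
   M'.  Either way |N(l)| <= |M(l)|; since every student assigned in M is assigned in N,
   summing over lecturers gives |N(l)| = |M(l)|, with equality project by project against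
   M or against M'.  A blocking pair of N then yields, through t when needed, a
   contradiction with the stability of M or of M'. *)

Lemma card_option_fibers (S T : finType) (f : S -> option T) (Q : pred T) :
  #|[set s | if f s is Some t then Q t else false]| =
  \sum_(t | Q t) #|[set s | f s == Some t]|.
Proof.
under [RHS]eq_bigr => t _ do rewrite -sum1dep_card.
rewrite -sum1dep_card (exchange_big_dep predT) //= big_mkcond /=.
apply: eq_bigr => s _; case: (f s) => [t|]; last by rewrite big_pred0 // => u; rewrite andbF.
under eq_bigl => u do rewrite (inj_eq Some_inj) eq_sym.
case: ifP => Qt; [rewrite (big_pred1 t) // | rewrite big_pred0 //] => u /=;
  by case: eqP => [->|_]; rewrite ?Qt ?andbF.
Qed.

Lemma sum_leq_eq (J : finType) (Q : pred J) (E1 E2 : J -> nat) :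
  (forall j, Q j -> E1 j <= E2 j) ->
  \sum_(j | Q j) E2 j <= \sum_(j | Q j) E1 j ->
  forall j, Q j -> E1 j = E2 j.
Proof.
move=> le12 le21 j Qj; have := (leqif_sum (fun i Qi => leqif_eq (le12 i Qi))).2.
by rewrite eqn_leq le21 (leq_sum _ le12) /= => /esym/forall_inP eq12; apply/eqP/eq12.
Qed.

Section Preferences.
Variables (S P L : finType) (I : spa_instance S P L).

Definition sprefers_opt (s : S) (p : P) (x : option P) : bool :=
  if x is Some q then sprefers I s p q else true.

Definition sweakly_prefers (s : S) (x y : option P) : bool :=
  match x, y with
  | _, None => true
  | None, Some _ => false
  | Some p, Some q => rankS I s p <= rankS I s q
  end.

Definition covets (M : assignment S P) (s : S) (p : P) : bool :=
  acceptable I s p && sprefers_opt s p (M s).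

Lemma sprefers_opt_neq s p x : sprefers_opt s p x -> x != Some p.
Proof. by case: x => // q; apply: contraTneq => -[->]; rewrite /= /sprefers ltnn. Qed.

Lemma sprefers_opt_trans s p x y :
  sprefers_opt s p x -> sweakly_prefers s x y -> sprefers_opt s p y.
Proof. by case: x; case: y => //= q r; rewrite /sprefers; apply: leq_trans. Qed.

Lemma covets_trans (M N : assignment S P) s p :
  sweakly_prefers s (N s) (M s) -> covets N s p -> covets M s p.
Proof. by move=> NM /andP[acc pref]; rewrite /covets acc (sprefers_opt_trans pref). Qed.

Lemma l_prefers_to_worstE l s (A : {set S}) :
  l_prefers_to_worst I l s A = [exists w in A, lprefers I l s w].
Proof.
rewrite /l_prefers_to_worst /worst; case: pickP => [w /andP[wA /forall_inP maxw] | nomax].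
  apply/idP/exists_inP => [sw | [u uA su]]; first by exists w.
  exact: leq_trans su (maxw u uA).
apply/esym/exists_inP => -[u uA _].
have [w wA maxw] := arg_maxnP (rankL I l) uA.
by move: (nomax w); rewrite [w \in A]wA /=; case/negP; apply/forall_inP.
Qed.

Lemma l_prefers_to_worstPn l s (A : {set S}) :
  reflect (forall w, w \in A -> ~~ lprefers I l s w) (~~ l_prefers_to_worst I l s A).
Proof. by rewrite l_prefers_to_worstE; apply: exists_inPn. Qed.

Lemma lprefers_antisym l u t : on_list I l u -> on_list I l t ->
  ~~ lprefers I l u t -> ~~ lprefers I l t u -> u = t.
Proof. by move=> ul tl; rewrite /lprefers -!leqNgt => tu ut; apply: rankL_inj ul tl _; lia. Qed.

Lemma Ml_on_list (M : assignment S P) l u :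
  is_assignment I M -> u \in Ml I M l -> on_list I l u.
Proof.
move=> HM; rewrite inE; case Mu: (M u) => [p|//] /eqP <-.
by case/andP: (HM _ _ Mu).
Qed.

Lemma Mp_subset_Ml (M : assignment S P) p : Mp M p \subset Ml I M (offer I p).
Proof. by apply/subsetP => u; rewrite !inE => /eqP ->. Qed.

Lemma card_Ml (M : assignment S P) l :
  #|Ml I M l| = \sum_(p | offer I p == l) #|Mp M p|.
Proof. exact: card_option_fibers. Qed.

Lemma sum_card_Ml (M : assignment S P) :
  \sum_l #|Ml I M l| = #|[set s | M s != None]|.
Proof.
have -> : #|[set s | M s != None]| =
          #|[set s | if omap (offer I) (M s) is Some _ then true else false]|.
  by apply: eq_card => s; rewrite !inE; case: (M s).
rewrite card_option_fibers; apply: eq_bigr => l _; apply: eq_card => s.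
by rewrite !inE; case: (M s).
Qed.

Lemma card_Mp_eq_of_le (M N : assignment S P) l :
  (forall q, offer I q = l -> #|Mp N q| <= #|Mp M q|) ->
  #|Ml I N l| = #|Ml I M l| ->
  forall q, offer I q = l -> #|Mp N q| = #|Mp M q|.
Proof.
rewrite !card_Ml => le_NM eq_Ml q /eqP; move: q.
by apply: sum_leq_eq => [q /eqP|]; [exact: le_NM | rewrite eq_Ml].
Qed.

Lemma not_blocks (M : assignment S P) s p :
  (covets M s p -> #|Mp M p| < cap I p ->
    [/\ #|Ml I M (offer I p)| = dcap I (offer I p), s \notin Ml I M (offer I p)
       & ~~ l_prefers_to_worst I (offer I p) s (Ml I M (offer I p))]) ->
  (covets M s p -> ~~ l_prefers_to_worst I (offer I p) s (Mp M p)) ->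
  ~~ blocks I M s p.
Proof.
move=> undersub worstMp; apply/negP => /and4P[acc _ pref].
have cov : covets M s p by rewrite /covets acc.
rewrite (negbTE (worstMp cov)) andbF orbF.
case: ltnP => [/(undersub cov)[-> nin nworst] | //] /=.
by rewrite ltnn (negbTE nin) (negbTE nworst) !andbF.
Qed.

Section Stable.
Variables (M : assignment S P) (HM : stable I M).

Lemma stable_covets_undersub s p : covets M s p -> #|Mp M p| < cap I p ->
  [/\ #|Ml I M (offer I p)| = dcap I (offer I p), s \notin Ml I M (offer I p)
    & ~~ l_prefers_to_worst I (offer I p) s (Ml I M (offer I p))].
Proof.
case: HM => -[_ [_ dcapM]] nb /andP[acc pref] under.
move: (nb s p); rewrite /blocks acc (sprefers_opt_neq pref).
move: pref; rewrite /sprefers_opt => -> /=; rewrite under /= !negb_or.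
case/and3P; rewrite -leqNgt => full.
have /eqP -> : #|Ml I M (offer I p)| == dcap I (offer I p) by rewrite eqn_leq full dcapM.
by rewrite eqxx /= => nin /andP[nworst _]; split.
Qed.

Lemma stable_covets_Mp s p : covets M s p ->
  ~~ l_prefers_to_worst I (offer I p) s (Mp M p).
Proof.
move=> cov; case: (ltnP #|Mp M p| (cap I p)) => [under | full].
  have [_ _ /l_prefers_to_worstPn nworst] := stable_covets_undersub cov under.
  by apply/l_prefers_to_worstPn => w /(subsetP (Mp_subset_Ml M p)); exact: nworst.
case: HM => -[_ [capM _]] nb; case/andP: cov => acc pref.
move: (nb s p); rewrite /blocks acc (sprefers_opt_neq pref).
move: pref; rewrite /sprefers_opt => -> /=.
have /eqP -> : #|Mp M p| == cap I p by rewrite eqn_leq capM.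
by rewrite eqxx ltnn.
Qed.

Lemma stable_assignment : is_assignment I M.
Proof. by case: HM => -[]. Qed.

Lemma stable_cap p : #|Mp M p| <= cap I p.
Proof. by case: HM => -[_ []]. Qed.

Lemma stable_dcap l : #|Ml I M l| <= dcap I l.
Proof. by case: HM => -[_ []]. Qed.

End Stable.

Definition rejected (M M' : assignment S P) (l : L) (t : S) : bool :=
  [&& t \in Ml I M' l, t \notin Ml I M l, #|Ml I M l| == dcap I l
    & ~~ l_prefers_to_worst I l t (Ml I M l)].

Lemma gain_other (M M' N : assignment S P) q t : N t = M t \/ N t = M' t ->
  t \in Mp N q :\: Mp M q -> t \in Mp M' q.
Proof. by rewrite !inE => -[]-> /andP[] // /negbTE->. Qed.

Lemma Mp_subsetU (M M' N : assignment S P) q : (forall s, N s = M s \/ N s = M' s) ->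
  Mp N q \subset Mp M q :|: Mp M' q.
Proof.
by move=> N_from; apply/subsetP => u; rewrite !inE; case: (N_from u) => -> ->; rewrite ?orbT.
Qed.

Lemma Ml_subsetU (M M' N : assignment S P) l : (forall s, N s = M s \/ N s = M' s) ->
  Ml I N l \subset Ml I M l :|: Ml I M' l.
Proof.
by move=> N_from; apply/subsetP => u; rewrite !inE; case: (N_from u) => -> ->; rewrite ?orbT.
Qed.

Section Improvement.
Variables (M N : assignment S P).
Hypotheses (HM : is_assignment I M) (HN : is_assignment I N).
Hypothesis NM : forall s, sweakly_prefers s (N s) (M s).

Lemma gain_covets t q : t \in Mp N q :\: Mp M q -> covets M t q.
Proof.
rewrite !inE => /andP[Mtq /eqP Ntq]; have acc := HN Ntq.
rewrite /covets acc; move: (NM t) Mtq; rewrite Ntq /=.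
case Mtr: (M t) => [r|] //= qr rq; rewrite /sprefers ltn_neqAle qr andbT.
apply: contraNneq rq => /rankS_inj eqr; rewrite eqr //.
  by case/andP: acc.
by case/andP: (HM Mtr).
Qed.

Lemma assigned_subset : [set s | M s != None] \subset [set s | N s != None].
Proof. by apply/subsetP => s; rewrite !inE; move: (NM s); case: (N s); case: (M s). Qed.

End Improvement.

Section MeetCounts.
Variables (M M' N : assignment S P).
Hypotheses (HM : stable I M) (HM' : stable I M').
Hypothesis N_from : forall s, N s = M s \/ N s = M' s.
Hypotheses (NM : forall s, sweakly_prefers s (N s) (M s))
           (NM' : forall s, sweakly_prefers s (N s) (M' s)).

Let N_fromC s : N s = M' s \/ N s = M s.
Proof. by case: (N_from s); [right | left]. Qed.

Lemma meet_is_assignment : is_assignment I N.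
Proof. by move=> s p; case: (N_from s) => ->; apply: stable_assignment. Qed.

Let gainM := gain_covets (stable_assignment HM) meet_is_assignment NM.
Let gainM' := gain_covets (stable_assignment HM') meet_is_assignment NM'.

Lemma Mp_meet_sub q : Mp N q \subset Mp M q \/ Mp N q \subset Mp M' q.
Proof.
case: (boolP (Mp N q \subset Mp M q)) => [|]; first by left.
rewrite -setD_eq0 => /set0Pn[t tg]; right; apply/subsetP => s sN.
apply/negPn/negP => sM'; have sg : s \in Mp N q :\: Mp M' q by rewrite in_setD sM'.
have tM' := gain_other (N_from t) tg; have sM := gain_other (N_fromC s) sg.
have /l_prefers_to_worstPn tworst := stable_covets_Mp HM (gainM tg).
have /l_prefers_to_worstPn sworst := stable_covets_Mp HM' (gainM' sg).
have st : s = t.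
  apply: (lprefers_antisym _ _ (sworst t tM') (tworst s sM)).
    exact: Ml_on_list (stable_assignment HM) (subsetP (Mp_subset_Ml M q) s sM).
  exact: Ml_on_list (stable_assignment HM') (subsetP (Mp_subset_Ml M' q) t tM').
by move: sM'; rewrite st tM'.
Qed.

Lemma card_Mp_meet q : #|Mp N q| <= cap I q.
Proof.
by case: (Mp_meet_sub q) => /subset_leq_card/leq_trans; apply; apply: stable_cap.
Qed.

Lemma lecturer_dichotomy l :
  (forall q, offer I q = l -> #|Mp N q| <= #|Mp M q|) \/ exists t, rejected M M' l t.
Proof.
case: (pickP (fun q => (offer I q == l) && (#|Mp M q| < #|Mp N q|))) => [q | none]; last first.
  by left => q ql; move: (none q); rewrite /= ql eqxx /= => /negbT; rewrite -leqNgt.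
case/andP => /eqP <- lt; right.
have /set0Pn[t tg] : Mp N q :\: Mp M q != set0.
  by rewrite setD_eq0; apply: contraTN lt => /subset_leq_card; rewrite -leqNgt.
have under : #|Mp M q| < cap I q := leq_trans lt (card_Mp_meet q).
have [full nin nworst] := stable_covets_undersub HM (gainM tg) under.
exists t; rewrite /rejected full eqxx nin nworst !andbT.
exact: subsetP (Mp_subset_Ml M' q) t (gain_other (N_from t) tg).
Qed.

Lemma rejected_card_Mp l t q : rejected M M' l t -> offer I q = l ->
  #|Mp N q| <= #|Mp M' q|.
Proof.
case/and4P => tM' tM _ /l_prefers_to_worstPn tworst ql.
case: (ltnP #|Mp M' q| (cap I q)) => [under | full]; last first.
  exact: leq_trans (card_Mp_meet q) full.
apply: subset_leq_card; apply/subsetP => u uN; apply/negPn/negP => uM'.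
have ug : u \in Mp N q :\: Mp M' q by rewrite in_setD uM'.
have [_ _] := stable_covets_undersub HM' (gainM' ug) under.
rewrite ql => /l_prefers_to_worstPn uworst.
have uM : u \in Ml I M l.
  by rewrite -ql (subsetP (Mp_subset_Ml M q)) // (gain_other (N_fromC u) ug).
have ut : u = t.
  apply: (lprefers_antisym _ _ (uworst t tM') (tworst u uM)).
    exact: Ml_on_list (stable_assignment HM) uM.
  exact: Ml_on_list (stable_assignment HM') tM'.
by move: tM; rewrite -ut uM.
Qed.

Lemma card_Ml_meet_le l : #|Ml I N l| <= #|Ml I M l|.
Proof.
case: (lecturer_dichotomy l) => [le | [t rej]].
  by rewrite !card_Ml; apply: leq_sum => q /eqP; exact: le.
case/and4P: (rej) => _ _ /eqP -> _; apply: leq_trans (stable_dcap HM' l).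
by rewrite !card_Ml; apply: leq_sum => q /eqP; exact: rejected_card_Mp rej.
Qed.

Lemma card_Ml_meet l : #|Ml I N l| = #|Ml I M l|.
Proof.
apply: (sum_leq_eq (Q := predT) (fun l _ => card_Ml_meet_le l)) => //.
by rewrite !sum_card_Ml subset_leq_card // assigned_subset.
Qed.

End MeetCounts.

Section MeetUndersubscribed.
Variables (M M' N : assignment S P).
Hypotheses (HM : stable I M) (HM' : stable I M').
Hypothesis N_from : forall s, N s = M s \/ N s = M' s.
Hypotheses (NM : forall s, sweakly_prefers s (N s) (M s))
           (NM' : forall s, sweakly_prefers s (N s) (M' s)).

Let N_fromC s : N s = M' s \/ N s = M s.
Proof. by case: (N_from s); [right | left]. Qed.

Lemma meet_undersub p : #|Mp N p| < cap I p ->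
  #|Mp M p| < cap I p \/ exists2 t, rejected M M' (offer I p) t & #|Mp M' p| < cap I p.
Proof.
move=> under; case: (lecturer_dichotomy HM HM' N_from NM NM' (offer I p)) => [le | [t rej]].
  by left; rewrite -(card_Mp_eq_of_le le (card_Ml_meet HM HM' N_from NM NM' _) (q := p)).
right; exists t => //.
have le q := rejected_card_Mp HM HM' N_from NM NM' (q := q) rej.
by rewrite -(card_Mp_eq_of_le le (card_Ml_meet HM' HM N_fromC NM' NM _) (q := p)).
Qed.

Lemma meet_covets_Ml s p w : covets N s p -> #|Mp N p| < cap I p ->
  w \in Ml I M (offer I p) -> (w != s) && ~~ lprefers I (offer I p) s w.
Proof.
move=> covN under wM.
case: (meet_undersub under) => [underM | [t rej underM']].
  have [_ nin /l_prefers_to_worstPn nworst] :=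
    stable_covets_undersub HM (covets_trans (NM s) covN) underM.
  by rewrite nworst // andbT; apply: contraNneq nin => <-.
case/and4P: rej => tM' tM _ /l_prefers_to_worstPn tworst.
have [_ _ /l_prefers_to_worstPn sworst] :=
  stable_covets_undersub HM' (covets_trans (NM' s) covN) underM'.
have st := sworst t tM'; have tw := tworst w wM.
apply/andP; split.
  apply: contraNneq tM => ws; rewrite -ws in st.
  have [tl wl] := (Ml_on_list (stable_assignment HM') tM', Ml_on_list (stable_assignment HM) wM).
  by rewrite (lprefers_antisym tl wl tw st).
by move: st tw; rewrite /lprefers -!leqNgt => /[swap]; apply: leq_trans.
Qed.

End MeetUndersubscribed.

Section MeetStable.
Variables (M M' N : assignment S P).
Hypotheses (HM : stable I M) (HM' : stable I M').
Hypothesis N_from : forall s, N s = M s \/ N s = M' s.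
Hypotheses (NM : forall s, sweakly_prefers s (N s) (M s))
           (NM' : forall s, sweakly_prefers s (N s) (M' s)).

Let N_fromC s : N s = M' s \/ N s = M s.
Proof. by case: (N_from s); [right | left]. Qed.

Lemma meet_covets_undersub s p : covets N s p -> #|Mp N p| < cap I p ->
  [/\ #|Ml I N (offer I p)| = dcap I (offer I p), s \notin Ml I N (offer I p)
    & ~~ l_prefers_to_worst I (offer I p) s (Ml I N (offer I p))].
Proof.
move=> covN under.
have outranks w : w \in Ml I N (offer I p) -> (w != s) && ~~ lprefers I (offer I p) s w.
  move/(subsetP (Ml_subsetU _ N_from)); rewrite inE => /orP[] wM.
    exact: (meet_covets_Ml HM HM' N_from NM NM' covN under wM).
  exact: (meet_covets_Ml HM' HM N_fromC NM' NM covN under wM).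
split.
- rewrite (card_Ml_meet HM HM' N_from NM NM').
  case: (meet_undersub HM HM' N_from NM NM' under) => [underM | [t rej _]].
    by case: (stable_covets_undersub HM (covets_trans (NM s) covN) underM).
  by case/and4P: rej => _ _ /eqP.
- by apply/negP => /outranks; rewrite eqxx.
- by apply/l_prefers_to_worstPn => w /outranks /andP[].
Qed.

Lemma meet_covets_Mp s p : covets N s p -> ~~ l_prefers_to_worst I (offer I p) s (Mp N p).
Proof.
move=> covN; apply/l_prefers_to_worstPn => w /(subsetP (Mp_subsetU _ N_from)).
have /l_prefers_to_worstPn worstM := stable_covets_Mp HM (covets_trans (NM s) covN).
have /l_prefers_to_worstPn worstM' := stable_covets_Mp HM' (covets_trans (NM' s) covN).
by rewrite inE => /orP[]; [exact: worstM | exact: worstM'].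
Qed.

Theorem pointwise_best_stable : stable I N.
Proof.
split; [split; [exact: meet_is_assignment HM HM' N_from | split => [q | l]] | move=> s p].
- exact: (card_Mp_meet HM HM' N_from NM NM').
- by rewrite (card_Ml_meet HM HM' N_from NM NM'); exact: stable_dcap.
- by apply: not_blocks; [exact: meet_covets_undersub | exact: meet_covets_Mp].
Qed.

End MeetStable.

Section MeetAssignment.
Variables (M M' : assignment S P) (s : S).

Lemma meet_assignment_from :
  meet_assignment I M M' s = M s \/ meet_assignment I M M' s = M' s.
Proof.
by rewrite /meet_assignment; case: (M s) => [p|]; case: (M' s) => [p'|]; try case: ifP; auto.
Qed.

Lemma meet_assignment_weakly_l : sweakly_prefers s (meet_assignment I M M' s) (M s).
Proof.
rewrite /meet_assignment /sprefers; case: (M s) => [p|]; case: (M' s) => [p'|] //=.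
by case: ltnP => //= /ltnW.
Qed.

Lemma meet_assignment_weakly_r : sweakly_prefers s (meet_assignment I M M' s) (M' s).
Proof.
rewrite /meet_assignment /sprefers; case: (M s) => [p|]; case: (M' s) => [p'|] //=.
by case: ltnP => //= /ltnW.
Qed.

End MeetAssignment.

End Preferences.

Theorem lemma8 (S P L : finType) (I : spa_instance S P L) (M M' : S -> option P) :
  stable I M -> stable I M' -> stable I (meet_assignment I M M').
Proof.
move=> HM HM'; apply: pointwise_best_stable HM HM' _ _ _ => s.
- exact: meet_assignment_from.
- exact: meet_assignment_weakly_l.
- exact: meet_assignment_weakly_r.
Qed.
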